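(* Let $B$ be an nbc basis of $M$ with $|\mathrm{IA}(B)|=k+1$. Write $B-\mathrm{IA}(B)=\{e_1>\cdots>e_{r-k}\}$ and $(E-B)-\min(E-B)=\{e_{r-k+1}<\cdots<e_{n-k-1}\}$. Define pairs $F_j|G_j$ for $1\le j\le n-k-1$ by \[ F_j|G_j=\begin{cases}\mathrm{cl}\{e_1,\dots,e_j\}\,|\,E & 1\le j\le r-k,\\ E\,|\,\mathrm{cl}^\perp\{e_j,e_{j+1},\dots,e_{n-k-1}\} & r-k+1\le j\le n-k-1.\end{cases} \] Then $\{F_1|G_1,\dots,F_{n-k-1}|G_{n-k-1}\}$ is a biflag of $M$ (the nbc biflag $\mathcal F(B)|\mathcal G(B)$).
   Context: Let $M$ be a matroid with no loops and no coloops on the ground set $E=\{0,1,\dots,n\}$, totally ordered by the usual order of integers, of rank $r+1$; its dual $M^\perp$ has rank $n-r$. Write $\mathrm{cl}$, $\mathrm{cl}^\perp$ for the closure operators of $M$, $M^\perp$. A biflat of $M$ is a pair $F|G$ where $F$ is a flat of $M$, $G$ is a flat of $M^\perp$, both are nonempty, they are not both equal to $E$, and $F\cup G=E$. Two biflats $F|G$, $F'|G'$ are compatible if ($F\subseteq F'$ and $G\supseteq G'$) or ($F\supseteq F'$ and $G\subseteq G'$). A biflag is a set of pairwise compatible biflats with $\bigcup_{F|G}(F\cap G)\neq E$. For a basis $B$ and $i\in B$, $C^\perp(B,i)$ is the unique cocircuit of $M$ contained in $(E-B)\cup i$ and containing $i$; for $i\notin B$, $C(B,i)$ is the unique circuit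 contained in $B\cup i$ and containing $i$. $\mathrm{IA}(B)=\{i\in B: i=\min C^\perp(B,i)\}$, $\mathrm{EA}(B)=\{i\notin B: i=\min C(B,i)\}$. $B$ is an nbc basis if $\mathrm{EA}(B)=\emptyset$. *)

(* Matroids on the ground set E = 'I_N (= {0,...,N-1}),
   given by their family of bases. *)
From mathcomp Require Import all_boot all_order.
Set Implicit Arguments. Unset Strict Implicit. Unset Printing Implicit Defensive.

Section Matroid.
Variable N : nat.
Local Notation T := 'I_N.
Implicit Types (Bs : {set {set T}}) (X Y B C I : {set T}).

Definition is_matroid Bs : Prop :=
  Bs != set0 /\
  forall B1 B2, B1 \in Bs -> B2 \in Bs -> forall x, x \in B1 :\: B2 ->
    exists2 y, y \in B2 :\: B1 & (y |: (B1 :\ x)) \in Bs.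

Definition dualB Bs : {set {set T}} := [set ~: B | B in Bs].

Definition indep Bs I : bool := [exists B in Bs, I \subset B].

Definition rank Bs X : nat := \max_(I : {set T} | indep Bs I && (I \subset X)) #|I|.

Definition cl Bs X : {set T} := [set e | rank Bs (e |: X) == rank Bs X].

Definition flat Bs F : bool := cl Bs F == F.

Definition is_loop Bs (e : T) : bool := [forall B in Bs, e \notin B].
Definition is_coloop Bs (e : T) : bool := [forall B in Bs, e \in B].

Definition circuit Bs C : bool :=
  ~~ indep Bs C && [forall D : {set T}, (D \proper C) ==> indep Bs D].
Definition cocircuit Bs C : bool := circuit (dualB Bs) C.

(* C(B,i), i \notin B : the unique circuit contained in B u i containing i *)
Definition fundCircuit Bs B (i : T) : {set T} :=
  odflt set0 [pick C | circuit Bs C && (C \subset i |: B) && (i \in C)].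
(* C^perp(B,i), i \in B : the unique cocircuit contained in (E-B) u i containing i *)
Definition fundCocircuit Bs B (i : T) : {set T} :=
  odflt set0 [pick C | cocircuit Bs C && (C \subset i |: ~: B) && (i \in C)].

Definition is_min (x : T) (A : {set T}) : bool :=
  (x \in A) && [forall y in A, (x <= y)%N].

Definition IA Bs B : {set T} := [set i in B | is_min i (fundCocircuit Bs B i)].
Definition EA Bs B : {set T} := [set i in ~: B | is_min i (fundCircuit Bs B i)].

Definition nbc_basis Bs B : bool := (B \in Bs) && (EA Bs B == set0).

Definition remove_min (A : {set T}) : {set T} := A :\: [set x | is_min x A].

Definition biflat Bs (FG : {set T} * {set T}) : bool :=
  let: (F, G) := FG in
  [&& flat Bs F, flat (dualB Bs) G, F != set0, G != set0,
      ~~ ((F == setT) && (G == setT)) & F :|: G == setT].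

Definition compatible (FG FG' : {set T} * {set T}) : bool :=
  let: (F, G) := FG in let: (F', G') := FG' in
  ((F \subset F') && (G' \subset G)) || ((F' \subset F) && (G \subset G')).

Definition biflag Bs (s : seq ({set T} * {set T})) : bool :=
  [&& all (biflat Bs) s, all2rel compatible s &
      \bigcup_(FG <- s) (FG.1 :&: FG.2) != setT].

(* e_1 > ... > e_{r-k} (elements of B - IA(B)) followed by
   e_{r-k+1} < ... < e_{n-k-1} (elements of (E-B) - min(E-B)) *)
Definition nbc_seq Bs B : seq T :=
  sort (fun x y : T => (y <= x)%N) (enum (B :\: IA Bs B)) ++
  sort (fun x y : T => (x <= y)%N) (enum (remove_min (~: B))).

(* F_j | G_j, for 1 <= j <= n-k-1 *)
Definition nbc_pair Bs B (r k j : nat) : {set T} * {set T} :=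
  if (j <= r - k)%N then (cl Bs [set x in take j (nbc_seq Bs B)], setT)
  else (setT, cl (dualB Bs) [set x in drop j.-1 (nbc_seq Bs B)]).

Definition nbc_biflag Bs B (n r k : nat) : seq ({set T} * {set T}) :=
  [seq nbc_pair Bs B r k j | j <- iota 1 (n - k - 1)].

End Matroid.

From mathcomp Require Import all_boot all_order.
From mathcomp Require Import zify.
Set Implicit Arguments. Unset Strict Implicit. Unset Printing Implicit Defensive.

(* Let B be an nbc basis and m = min(E-B) (E-B is nonempty as M has no coloops).  Since m
   is not externally active, the fundamental circuit C(B,m) contains some c < m; then
   m |: (B - c) is a basis, and c is internally active, because C^perp(B,c) lies in
   c |: (E-B), whose other elements are >= m.  Hence
   - every F_j = cl{e_1..e_j} is the closure of a subset of B - IA(B) <= B - c, and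
     m |: (B - c) is independent, so m is not in F_j;
   - every G_j is the coclosure of a subset of (E-B) - m, and E-B is a cobasis, so m is
     not in G_j.
   The F_j increase and the G_j decrease, so the pairs are compatible biflats, and m lies
   in no F_j :&: G_j, which makes the family a biflag. *)

Section Independence.
Variables (N : nat) (Bs : {set {set 'I_N}}).
Local Notation T := 'I_N.
Implicit Types (I J K X Y Z C B : {set T}) (e x y : T).

Lemma indepP I : reflect (exists2 B, B \in Bs & I \subset B) (indep Bs I).
Proof. exact: exists_inP. Qed.

Lemma basis_indep B : B \in Bs -> indep Bs B.
Proof. by move=> HB; apply/indepP; exists B. Qed.

Lemma indep_sub I J : J \subset I -> indep Bs I -> indep Bs J.
Proof.
by move=> JI /indepP[B HB IB]; apply/indepP; exists B; rewrite ?(subset_trans JI).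
Qed.

Lemma sub_cl X : X \subset cl Bs X.
Proof.
apply/subsetP => e eX; rewrite inE; apply/eqP; congr rank.
by apply/setUidPr; rewrite sub1set.
Qed.

Lemma flatT : flat Bs setT.
Proof. by rewrite /flat eqEsubset subsetT sub_cl. Qed.

Lemma rank_ge K X : indep Bs K -> K \subset X -> #|K| <= rank Bs X.
Proof. by move=> HK KX; apply: (leq_bigmax_cond K); rewrite HK KX. Qed.

Lemma rank_ex X : Bs != set0 ->
  exists2 K, indep Bs K && (K \subset X) & #|K| = rank Bs X.
Proof.
case/set0Pn=> B0 HB0.
have P0 : 0 < #|[pred I : {set T} | indep Bs I && (I \subset X)]|.
  apply/card_gt0P; exists set0; rewrite inE sub0set andbT.
  by apply/indepP; exists B0; rewrite ?sub0set.
have [K HK HKmax] := eq_bigmax_cond (fun I : {set T} => #|I|) P0.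
by exists K; rewrite // /rank -HKmax.
Qed.

Lemma circuit_dep C : circuit Bs C -> ~~ indep Bs C.
Proof. by case/andP. Qed.

Lemma circuit_indep C y : circuit Bs C -> y \in C -> indep Bs (C :\ y).
Proof. by move=> /andP[_ /forallP/(_ (C :\ y))] H yC; move: H; rewrite properD1. Qed.

(* A smallest dependent subset of e |: Z, for Z independent, is a circuit through e. *)
Lemma circuit_ex Z e : indep Bs Z -> ~~ indep Bs (e |: Z) ->
  exists C, [&& circuit Bs C, C \subset e |: Z & e \in C].
Proof.
move=> HZ HeZ.
pose P (D : {set T}) := (D \subset e |: Z) && ~~ indep Bs D.
have PeZ : P (e |: Z) by rewrite /P subxx.
have [C /andP[CeZ Cdep] Cmin] := @arg_minnP _ _ P (fun D : {set T} => #|D|) PeZ.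
exists C; apply/and3P; split => //.
- rewrite /circuit Cdep; apply/forall_inP => D DC; apply: contraT => Ddep.
  have := Cmin D; rewrite /P Ddep (subset_trans (proper_sub DC) CeZ) => /(_ isT).
  by rewrite leqNgt (proper_card DC).
- apply: contraT => eC; have CZ : C \subset Z.
    apply/subsetP => x xC; move/subsetP: CeZ => /(_ x xC) /setU1P[xe|//].
    by move: eC; rewrite -xe xC.
  by rewrite (indep_sub CZ HZ) in Cdep.
Qed.

Lemma fundCircuitP Z e : indep Bs Z -> ~~ indep Bs (e |: Z) ->
  [&& circuit Bs (fundCircuit Bs Z e), fundCircuit Bs Z e \subset e |: Z &
      e \in fundCircuit Bs Z e].
Proof.
move=> HZ HeZ; rewrite /fundCircuit; case: pickP => [C /andP[/andP[-> ->] ->] //|none].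
have [C /and3P[C1 C2 C3]] := circuit_ex HZ HeZ.
by move: (none C); rewrite C1 C2 C3.
Qed.

Lemma memdual X : (X \in dualB Bs) = (~: X \in Bs).
Proof.
apply/imsetP/idP => [[B HB ->]|H]; first by rewrite setCK.
by exists (~: X); rewrite ?setCK.
Qed.

End Independence.

Section Matroid.
Variables (N : nat) (Bs : {set {set 'I_N}}) (d : nat).
Local Notation T := 'I_N.
Hypothesis HM : is_matroid Bs.
Hypothesis Hd : forall B, B \in Bs -> #|B| = d.
Implicit Types (I J K X Y Z C B : {set T}) (e x y : T).

Lemma Bs_neq0 : Bs != set0. Proof. by case: HM. Qed.

Lemma indep_card I : indep Bs I -> #|I| <= d.
Proof. by move=> /indepP[B HB IB]; rewrite -(Hd HB) subset_leq_card. Qed.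

Lemma basis_add_dep B x : B \in Bs -> x \notin B -> ~~ indep Bs (x |: B).
Proof. by move=> HB xB; apply/negP => /indep_card; rewrite cardsU1 xB (Hd HB) ltnn. Qed.

Lemma fundCircuit_basis B x : B \in Bs -> x \notin B ->
  [&& circuit Bs (fundCircuit Bs B x), fundCircuit Bs B x \subset x |: B &
      x \in fundCircuit Bs B x].
Proof.
by move=> HB xB; apply: fundCircuitP; [apply: basis_indep | apply: basis_add_dep].
Qed.

(* Bases B through I and B' through J can be chosen with B inside I :|: B': for a pair
   maximizing #|B :&: B'|, an element of B outside I :|: B' could be exchanged into B'. *)
Lemma close_bases I J : indep Bs I -> indep Bs J ->
  exists B, exists2 B', [/\ B \in Bs, B' \in Bs, I \subset B & J \subset B']
                      & B \subset I :|: B'.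
Proof.
move=> /indepP[B0 HB0 IB0] /indepP[B0' HB0' JB0'].
pose P (p : {set T} * {set T}) :=
  [&& p.1 \in Bs, p.2 \in Bs, I \subset p.1 & J \subset p.2].
have P0 : P (B0, B0') by rewrite /P /= HB0 HB0' IB0 JB0'.
have [[B B'] /and4P[/= HB HB' IB JB'] Bmax] :=
  @arg_maxnP _ _ P (fun p => #|p.1 :&: p.2|) P0.
exists B, B'; first by [].
apply/subsetP => x xB; rewrite inE; case: (boolP (x \in I)) => //= xI.
apply: contraT => xB'.
have xBB' : x \in B :\: B' by rewrite inE xB xB'.
have [y /setDP[yB' yB] HyB] := HM.2 B B' HB HB' x xBB'.
have Iy : I \subset y |: (B :\ x).
  apply/subsetP => z zI; rewrite !inE (subsetP IB z zI) andbT; apply/orP; right.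
  by apply: contraNneq xI => <-.
have grow : B :&: B' \proper (y |: (B :\ x)) :&: B'.
  apply/properP; split; last by exists y; rewrite !inE ?eqxx ?yB' ?(negbTE yB).
  apply/subsetP => z /setIP[zB zB']; rewrite !inE zB zB' !andbT; apply/orP; right.
  by apply: contraNneq xB' => <-.
have := Bmax (y |: (B :\ x), B'); rewrite /P /= HyB HB' Iy JB' => /(_ isT).
by rewrite leqNgt (proper_card grow).
Qed.

Lemma augment I J : indep Bs I -> indep Bs J -> #|I| < #|J| ->
  exists2 x, x \in J :\: I & indep Bs (x |: I).
Proof.
move=> HI HJ ltIJ; apply/exists_inP; apply: contraLR ltIJ => /exists_inPn noaug.
rewrite -leqNgt.
have [B [B' [HB HB' IB JB'] BIB']] := close_bases HI HJ.
(* no element of J :\: I lies in B, as it could be added to I *)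
have BnotD x : x \in B -> x \notin J :\: I.
  move=> xB; apply/negP => xD; move/negP: (noaug x xD); apply.
  by apply/indepP; exists B; rewrite // subUset sub1set xB IB.
have Bsub : B \subset (I :\: B') :|: (B' :\: (J :\: I)).
  apply/subsetP => x xB; move: (BnotD x xB) (subsetP BIB' x xB) (subsetP JB' x).
  by rewrite !inE; case: (x \in I); case: (x \in B'); case: (x \in J).
(* Counting: d <= #|I :\: B'| + (d - #|J :\: I|) and #|I :\: B'| <= #|I :\: J|. *)
have cardB := subset_leq_card Bsub.
have cardU := cardsUI (I :\: B') (B' :\: (J :\: I)).
have cardB' := cardsID (J :\: I) B'.
have DB' : B' :&: (J :\: I) = J :\: I.
  by apply/setIidPr; apply: subset_trans JB'; apply: subsetDl.
have IB'_IJ : #|I :\: B'| <= #|I :\: J| by apply/subset_leq_card/setDS.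
have cardI := cardsID J I; have cardJ := cardsID I J.
rewrite DB' (Hd HB') in cardB'; rewrite (Hd HB) in cardB; rewrite setIC in cardJ.
lia.
Qed.

Lemma extend I K Y : indep Bs I -> I \subset Y -> indep Bs K -> K \subset Y ->
  exists J, [/\ indep Bs J, I \subset J, J \subset Y & #|K| <= #|J|].
Proof.
move=> HI IY HK KY.
pose P (J : {set T}) := [&& indep Bs J, I \subset J & J \subset Y].
have PI : P I by rewrite /P HI subxx IY.
have [J /and3P[HJ IJ JY] Jmax] := @arg_maxnP _ _ P (fun J : {set T} => #|J|) PI.
exists J; split => //; rewrite leqNgt; apply/negP => ltJK.
have [x /setDP[xK xJ] HxJ] := augment HJ HK ltJK.
have := Jmax (x |: J); rewrite /P HxJ (subset_trans IJ (subsetUr _ _)).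
rewrite subUset sub1set (subsetP KY x xK) JY => /(_ isT).
by rewrite cardsU1 xJ /= ltnn.
Qed.

Lemma circuit_exch B0 e C y : B0 \in Bs -> e \notin B0 -> circuit Bs C ->
  C \subset e |: B0 -> y \in C -> y != e -> e |: (B0 :\ y) \in Bs.
Proof.
move=> HB0 eB0 HC CeB0 yC ye.
have yB0 : y \in B0.
  by move/subsetP: CeB0 => /(_ y yC) /setU1P[/eqP|//]; rewrite (negbTE ye).
have [J [HJ CyJ JeB0 cardJ]] :=
  extend (circuit_indep HC yC) (subset_trans (subD1set _ _) CeB0)
         (basis_indep HB0) (subsetUr _ _).
have yJ : y \notin J.
  apply/negP => yJ; have CJ : C \subset J.
    apply/subsetP => z zC; case: (eqVneq z y) => [->//|zy].
    by apply: (subsetP CyJ); rewrite !inE zy.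
  by move: (circuit_dep HC); rewrite (indep_sub CJ HJ).
have JsubE : J \subset e |: (B0 :\ y).
  apply/subsetP => z zJ; rewrite !inE; move/subsetP: JeB0 => /(_ z zJ); rewrite !inE.
  by case: (eqVneq z e) => //= _ ->; rewrite andbT; apply: contraNneq yJ => <-.
have cardE : #|e |: (B0 :\ y)| = #|B0|.
  by rewrite cardsU1 !inE (negbTE eB0) andbF (cardsD1 y B0) yB0.
have -> : e |: (B0 :\ y) = J by apply/esym/eqP; rewrite eqEcard JsubE cardE cardJ.
have /indepP[B HB JB] := HJ.
suff -> : J = B by [].
by apply/eqP; rewrite eqEcard JB (Hd HB) -(Hd HB0).
Qed.

Lemma rank_mono X Y : X \subset Y -> rank Bs X <= rank Bs Y.
Proof.
move=> XY; have [K /andP[HK KX] <-] := rank_ex X Bs_neq0.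
exact: rank_ge HK (subset_trans KX XY).
Qed.

Lemma rank_indep I : indep Bs I -> rank Bs I = #|I|.
Proof.
move=> HI; apply/eqP; rewrite eqn_leq rank_ge // andbT.
by have [K /andP[_ KI] <-] := rank_ex I Bs_neq0; apply: subset_leq_card.
Qed.

Lemma cl_basis X I : indep Bs I -> I \subset X -> #|I| = rank Bs X ->
  forall e, (e \in cl Bs X) = (e \in I) || ~~ indep Bs (e |: I).
Proof.
move=> HI IX rI e; rewrite inE; apply/eqP/idP.
  move=> reX; apply: contraT; rewrite negb_or negbK => /andP[eI HeI].
  by have := rank_ge HeI (setUS [set e] IX); rewrite reX -rI cardsU1 eI ltnn.
move=> spanned; apply/eqP; rewrite eqn_leq (rank_mono (subsetUr [set e] X)) andbT.
have [K /andP[HK KeX] <-] := rank_ex (e |: X) Bs_neq0.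
rewrite -rI leqNgt; apply/negP => ltIK.
have [x /setDP[xK xI] HxI] := augment HI HK ltIK.
move/subsetP: KeX => /(_ x xK) /setU1P[xe|xX].
  by move: spanned; rewrite -xe (negbTE xI) HxI.
have := rank_ge HxI (_ : x |: I \subset X); rewrite subUset sub1set xX IX => /(_ isT).
by rewrite -rI cardsU1 xI ltnn.
Qed.

Lemma cl_idem X : cl Bs (cl Bs X) = cl Bs X.
Proof.
have [I /andP[HI IX] rI] := rank_ex X Bs_neq0.
have Icl : I \subset cl Bs X := subset_trans IX (sub_cl Bs X).
have rIcl : #|I| = rank Bs (cl Bs X).
  apply/eqP; rewrite eqn_leq rank_ge //=.
  have [K /andP[HK Kcl] <-] := rank_ex (cl Bs X) Bs_neq0.
  rewrite leqNgt; apply/negP => ltIK.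
  have [x /setDP[xK xI] HxI] := augment HI HK ltIK.
  by move: (subsetP Kcl x xK); rewrite (cl_basis HI IX rI) (negbTE xI) HxI.
by apply/setP => e; rewrite (cl_basis HI Icl rIcl) (cl_basis HI IX rI).
Qed.

Lemma flat_cl X : flat Bs (cl Bs X).
Proof. by rewrite /flat cl_idem. Qed.

Lemma cl_mono X Y : X \subset Y -> cl Bs X \subset cl Bs Y.
Proof.
move=> XY.
have [I /andP[HI IX] rI] := rank_ex X Bs_neq0.
have [K /andP[HK KY] rK] := rank_ex Y Bs_neq0.
have [J [HJ IJ JY cardJ]] := extend HI (subset_trans IX XY) HK KY.
have rJ : #|J| = rank Bs Y by apply/eqP; rewrite eqn_leq rank_ge // -rK cardJ.
apply/subsetP => e; rewrite (cl_basis HI IX rI) (cl_basis HJ JY rJ).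
case/orP => [eI|eIdep]; first by rewrite (subsetP IJ e eI).
by case: (e \in J) => //=; apply: contra eIdep; apply: indep_sub; apply: setUS.
Qed.

Lemma notin_cl_sub S X e : indep Bs (e |: S) -> e \notin S -> X \subset S ->
  e \notin cl Bs X.
Proof.
move=> HeS eS XS.
have HeX : indep Bs (e |: X) := indep_sub (setUS _ XS) HeS.
have HX : indep Bs X := indep_sub (subsetUr _ _) HeX.
rewrite (cl_basis HX (subxx _) (esym (rank_indep HX))) HeX orbF.
by apply: contra eS; apply: subsetP.
Qed.

Lemma dual_matroid : is_matroid (dualB Bs).
Proof.
split.
  by case/set0Pn: Bs_neq0 => B HB; apply/set0Pn; exists (~: B); apply: imset_f.
move=> _ _ /imsetP[B1 HB1 ->] /imsetP[B2 HB2 ->] x; rewrite !inE negbK => /andP[xB2 xB1].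
have [C /and3P[HC CxB1 xC]] := circuit_ex (basis_indep HB1) (basis_add_dep HB1 xB1).
have /subsetPn[y yC yB2] : ~~ (C \subset B2).
  by apply: contra (circuit_dep HC) => CB2; apply/indepP; exists B2.
have yx : y != x by apply: contraNneq yB2 => ->.
have yB1 : y \in B1.
  by move/subsetP: CxB1 => /(_ y yC) /setU1P[/eqP|//]; rewrite (negbTE yx).
exists y; first by rewrite !inE yB2 yB1.
rewrite memdual (_ : ~: _ = x |: (B1 :\ y)); first exact: circuit_exch HC CxB1 yC yx.
apply/setP => z; rewrite !inE.
case: (eqVneq z y) => [->|zy]; first by rewrite yB1 /= (negbTE yx).
by case: (eqVneq z x) => [->|zx] //=; rewrite negbK.
Qed.

Lemma dual_card B : B \in dualB Bs -> #|B| = N - d.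
Proof.
rewrite memdual => HB; have := cardsC (~: B); rewrite setCK card_ord (Hd HB).
by move: #|B| => b; lia.
Qed.

Lemma compl_basis_neq0 B e : B \in Bs -> ~~ is_coloop Bs e -> ~: B != set0.
Proof.
move=> HB /forallPn[B']; rewrite negb_imply => /andP[HB' eB'].
apply: contraNneq eB' => compl0.
have cardT : #|[set: T]| = d by rewrite -(Hd HB) -(setCK B) compl0 setC0.
suff -> : B' = setT by rewrite inE.
by apply/eqP; rewrite eqEcard subsetT (Hd HB') cardT leqnn.
Qed.
End Matroid.

Section Minimum.
Variable N : nat.
Implicit Types (A : {set 'I_N}) (x m : 'I_N).

Lemma ex_min A : A != set0 -> exists m, is_min m A.
Proof.
case/set0Pn => a aA.
have [m mA m_le] := @arg_minnP _ a (fun x => x \in A) (fun x : 'I_N => nat_of_ord x) aA.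
by exists m; rewrite /is_min mA; apply/forall_inP.
Qed.

Lemma is_min_uniq A m x : is_min m A -> is_min x A -> x = m.
Proof.
move=> /andP[mA /forall_inP m_le] /andP[xA /forall_inP x_le].
by apply/val_inj/eqP; rewrite eqn_leq x_le ?m_le.
Qed.

Lemma remove_minE A m : is_min m A -> remove_min A = A :\ m.
Proof.
move=> mmin; apply/setP => x; rewrite !inE; congr (~~ _ && _).
by apply/idP/eqP => [xmin|->]; [apply: is_min_uniq mmin xmin | apply: mmin].
Qed.

End Minimum.

Section NbcPartner.
Variables (N : nat) (Bs : {set {set 'I_N}}) (d : nat).
Hypothesis HM : is_matroid Bs.
Hypothesis Hd : forall B, B \in Bs -> #|B| = d.

(* Since m is not
   externally active, C(B,m) contains some c < m, and exchanging c for m gives a basis.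
   Moreover c is internally active: C^perp(B,c) lies in c |: (E-B), whose other elements
   are all >= m > c. *)
Lemma nbc_partner B m : B \in Bs -> EA Bs B = set0 -> is_min m (~: B) ->
  exists2 c, c \in IA Bs B & m |: (B :\ c) \in Bs.
Proof.
move=> HB EA0 /andP[mBc /forall_inP m_le].
have mB : m \notin B by rewrite inE in mBc.
have /and3P[Ccirc CmB mC] := fundCircuit_basis Hd HB mB.
have : m \notin EA Bs B by rewrite EA0 inE.
rewrite inE mBc /= /is_min mC /= => /forall_inPn[c cC]; rewrite -ltnNge => c_lt_m.
have cm : c != m by rewrite neq_ltn c_lt_m.
have cB : c \in B.
  by move/subsetP: CmB => /(_ c cC) /setU1P[/eqP|//]; rewrite (negbTE cm).
have exch := circuit_exch HM Hd HB mB Ccirc CmB cC cm.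
exists c => //.
have Bcd : ~: B \in dualB Bs by apply: imset_f.
have cBc : c \notin ~: B by rewrite inE cB.
have /and3P[_ DcB cD] := fundCircuit_basis (dual_card Hd) Bcd cBc.
rewrite inE cB /=; change (is_min c (fundCircuit (dualB Bs) (~: B) c)).
rewrite /is_min cD; apply/forall_inP => z zD.
move/subsetP: DcB => /(_ z zD) /setU1P[->//|zBc].
exact: ltnW (leq_trans c_lt_m (m_le z zBc)).
Qed.

End NbcPartner.

Section Biflats.
Variables (N : nat) (Bs : {set {set 'I_N}}).

Lemma biflat_flatT F m : flat Bs F -> F != set0 -> m \notin F -> biflat Bs (F, setT).
Proof.
move=> flatF F0 mF; rewrite /biflat flatF flatT F0 setUT !eqxx !andbT /=.
apply/andP; split; first by apply/set0Pn; exists m; rewrite inE.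
by apply: contra mF => /eqP->; rewrite inE.
Qed.

Lemma biflat_Tflat G m : flat (dualB Bs) G -> G != set0 -> m \notin G ->
  biflat Bs (setT, G).
Proof.
move=> flatG G0 mG; rewrite /biflat flatG flatT G0 setTU !eqxx !andbT /=.
apply/andP; split; first by apply/set0Pn; exists m; rewrite inE.
by apply: contra mG => /eqP->; rewrite inE.
Qed.

End Biflats.

Definition chain_pair N (Bs : {set {set 'I_N}}) (s : seq 'I_N) (t j : nat)
    : {set 'I_N} * {set 'I_N} :=
  if j <= t then (cl Bs [set x in take j s], setT)
  else (setT, cl (dualB Bs) [set x in drop j.-1 s]).

Section ChainBiflag.
Variables (N : nat) (Bs : {set {set 'I_N}}) (d : nat).
Hypothesis HM : is_matroid Bs.
Hypothesis Hd : forall B, B \in Bs -> #|B| = d.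

(* Prefixes grow and suffixes shrink, so any two chain pairs are compatible. *)
Lemma chain_pair_compatible (s : seq 'I_N) (t j j' : nat) :
  compatible (chain_pair Bs s t j) (chain_pair Bs s t j').
Proof.
have takeS i i' : i <= i' -> [set x in take i s] \subset [set x in take i' s].
  by move=> le; apply/subsetP => x; rewrite !inE -(take_takel s le); apply: mem_take.
have dropS i i' : i <= i' -> [set x in drop i'.-1 s] \subset [set x in drop i.-1 s].
  move=> le; apply/subsetP => x; rewrite !inE.
  by rewrite -(@subnK i.-1 i'.-1) -?drop_drop; [apply: mem_drop | lia].
have HMd := dual_matroid HM Hd; have Hdd := dual_card Hd.
rewrite /chain_pair /compatible.
case: ifP => _; case: ifP => _; rewrite ?subsetT ?andbT ?orbT //=.
- by case: (leqP j j') => [le|/ltnW le]; rewrite (cl_mono HM Hd (takeS _ _ le)) ?orbT.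
- by case: (leqP j j') => [le|/ltnW le]; rewrite (cl_mono HMd Hdd (dropS _ _ le)) ?orbT.
Qed.

(* If the first t elements of s lie in a set S with m |: S independent and the others
   in a set S' with m |: S' coindependent (m outside S and S'), then the first L chain
   pairs form a biflag: each F_j and each G_j avoids m, so m lies in no F_j :&: G_j. *)
Lemma chain_biflag (s : seq 'I_N) (t L : nat) (m : 'I_N) (S S' : {set 'I_N}) :
  L <= size s ->
  {subset take t s <= S} -> indep Bs (m |: S) -> m \notin S ->
  {subset drop t s <= S'} -> indep (dualB Bs) (m |: S') -> m \notin S' ->
  biflag Bs [seq chain_pair Bs s t j | j <- iota 1 L].
Proof.
move=> Ls sS HmS mS sS' HmS' mS'.
have HMd := dual_matroid HM Hd; have Hdd := dual_card Hd.
have set_neq0 (u : seq 'I_N) : 0 < size u -> [set x in u] != set0.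
  by case: u => // x u _; apply/set0Pn; exists x; rewrite inE mem_head.
have good j : 0 < j <= L ->
    biflat Bs (chain_pair Bs s t j)
    && (m \notin (chain_pair Bs s t j).1 :&: (chain_pair Bs s t j).2).
  case/andP => j0 jL; rewrite /chain_pair; case: ifP => [jt|/negbT].
    have XS : [set x in take j s] \subset S.
      by apply/subsetP => x; rewrite inE -(take_takel s jt) => /mem_take/sS.
    have mX := notin_cl_sub HM Hd HmS mS XS.
    have X0 : [set x in take j s] != set0 by rewrite set_neq0 // size_takel //; lia.
    apply/andP; split; last by rewrite /= setIT.
    apply: (biflat_flatT (flat_cl HM Hd _) _ mX).
    by apply: contraNneq X0 => cl0; rewrite -subset0 -cl0 sub_cl.
  rewrite -ltnNge => tj.
  have YS : [set x in drop j.-1 s] \subset S'.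
    apply/subsetP => x; rewrite inE -(@subnK t j.-1) -?drop_drop; last by lia.
    by move=> /mem_drop/sS'.
  have mY := notin_cl_sub HMd Hdd HmS' mS' YS.
  have Y0 : [set x in drop j.-1 s] != set0 by rewrite set_neq0 // size_drop; lia.
  apply/andP; split; last by rewrite /= setTI.
  apply: (biflat_Tflat (flat_cl HMd Hdd _) _ mY).
  by apply: contraNneq Y0 => cl0; rewrite -subset0 -cl0 sub_cl.
have in_range j : j \in iota 1 L -> 0 < j <= L.
  by rewrite mem_iota; lia.
apply/and3P; split.
- by apply/allP => _ /mapP[j /in_range/good/andP[biflat_j _] ->].
- by apply/allrelP => _ _ /mapP[j _ ->] /mapP[j' _ ->]; apply: chain_pair_compatible.
- have : m \notin \bigcup_(j <- iota 1 L)
                   ((chain_pair Bs s t j).1 :&: (chain_pair Bs s t j).2).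
    rewrite big_seq; apply: (big_ind (fun A : {set 'I_N} => m \notin A)).
    + by rewrite inE.
    + by move=> A A' mA mA'; rewrite inE negb_or mA mA'.
    + by move=> j /in_range/good/andP[_ ->].
  by rewrite big_map; apply: contraNneq => ->; rewrite inE.
Qed.

End ChainBiflag.

Section NbcSequence.
Variables (N : nat) (Bs : {set {set 'I_N}}) (B : {set 'I_N}).

Lemma nbc_seq_split :
  [/\ size (nbc_seq Bs B) = #|B :\: IA Bs B| + #|remove_min (~: B)|,
      {subset take #|B :\: IA Bs B| (nbc_seq Bs B) <= B :\: IA Bs B} &
      {subset drop #|B :\: IA Bs B| (nbc_seq Bs B) <= remove_min (~: B)}].
Proof.
rewrite /nbc_seq; set s1 := sort _ _; set s2 := sort _ _.
have size1 : size s1 = #|B :\: IA Bs B| by rewrite size_sort cardE.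
have size2 : size s2 = #|remove_min (~: B)| by rewrite size_sort cardE.
split; first by rewrite size_cat size1 size2.
- by rewrite take_size_cat // => x; rewrite mem_sort mem_enum.
- by rewrite drop_size_cat // => x; rewrite mem_sort mem_enum.
Qed.

Lemma nbc_biflagE n r k :
  nbc_biflag Bs B n r k =
  [seq chain_pair Bs (nbc_seq Bs B) (r - k) j | j <- iota 1 (n - k - 1)].
Proof. by []. Qed.

End NbcSequence.

Theorem mainTheorem4 (n r : nat) (Bs : {set {set 'I_n.+1}})
  (HM : is_matroid Bs)
  (Hloop : forall e, ~~ is_loop Bs e)
  (Hcoloop : forall e, ~~ is_coloop Bs e)
  (Hrank : forall B, B \in Bs -> #|B| = r.+1)
  (B : {set 'I_n.+1}) (HB : nbc_basis Bs B)
  (k : nat) (Hk : #|IA Bs B| = k.+1) :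
  biflag Bs (nbc_biflag Bs B n r k).
Proof.
have [HBB /eqP EA0] := andP HB.
have [m m_min] := ex_min (compl_basis_neq0 Hrank HBB (Hcoloop ord0)).
have mB : m \notin B by case/andP: m_min; rewrite inE.
have [c cIA Bmc] := nbc_partner HM Hrank HBB EA0 m_min.
have [size_s take_s drop_s] := nbc_seq_split Bs B.
have IAB : IA Bs B \subset B by apply/subsetP => x; rewrite inE => /andP[].
have card_act : #|B :\: IA Bs B| = r - k.
  by rewrite cardsD (setIidPr IAB) Hk (Hrank _ HBB) subSS.
have card_rest : #|~: B| = #|~: B :\ m|.+1 by rewrite (cardsD1 m) inE mB.
have card_co : r.+1 + #|~: B| = n.+1 by rewrite -(Hrank _ HBB) cardsC card_ord.
have kr : k <= r by have := subset_leq_card IAB; rewrite Hk (Hrank _ HBB).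
rewrite card_act (remove_minE m_min) in size_s take_s drop_s.
(* S = B - c and S' = (E-B) - m witness the chain criterion *)
rewrite nbc_biflagE.
apply: (chain_biflag HM Hrank (m := m) (S := B :\ c) (S' := ~: B :\ m)).
- by rewrite size_s; move: #|~: B :\ m| card_rest card_co => a; lia.
- move=> x /take_s; rewrite in_setD in_setD1 => /andP[xIA ->]; rewrite andbT.
  by apply: contraNneq xIA => ->.
- exact: basis_indep Bmc.
- by rewrite !inE (negbTE mB) andbF.
- exact: drop_s.
- by rewrite setD1K ?inE //; apply/basis_indep/imset_f.
- by rewrite !inE eqxx.
Qed.
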